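(* Let $T$ be a positive integer and let $\mathfrak{D}$ be a distribution over query–document pairs $(q,d)$. Suppose there is an unknown weight vector $w_*\in\mathbb{R}^T$, and that for each sampled pair $(q,d)$ one observes the feature vector $x_{(q,d)}$ together with the score $s_{(q,d)}=\langle w_*, x_{(q,d)}\rangle$. Let $$A=\mathbb{E}_{(q,d) \sim \mathfrak{D}} \left[ \tfrac{1}{\mathrm{len}(q)}\, x_{(q,d)}x_{(q,d)}^{\top} \right]\in\mathbb{R}^{T\times T},$$ and assume $\lambda_{\min}(A)>0$. Then there exist an absolute constant $C>0$ and an algorithm such that, for every $\delta\in(0,1)$, given $n \geq \frac{C}{\lambda_{\min}(A)} \log\left(\frac{T}{\delta}\right)$ pairs sampled i.i.d. from $\mathfrak{D}$ (with their observed feature vectors and scores), with probability at least $1-\delta$ the algorithm outputs exactly $w_*$.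
   Context: Tokens are elements of $[T]=\{1,\dots,T\}$. A query is a finite token sequence $q=(q_1,\dots,q_{\mathrm{len}(q)})$ and a document a finite token sequence $d=(d_1,\dots,d_{\mathrm{len}(d)})$. Fixed encoders assign unit vectors $E_q(q_i)\in\mathbb{R}^m$ to query token positions and $E_d(d_j)\in\mathbb{R}^m$ to document token positions. The feature vector $x_{(q,d)}\in\mathbb{R}^T$ has $t$-th coordinate equal to $\max_{j\in[\mathrm{len}(d)]} E_q(q_t)^\top E_d(d_j)$ if token $t$ occurs in $q$ (here $q_t$ denotes the occurrence of token $t$ in $q$), and $0$ otherwise. The paper models the Weighted Chamfer score with weights $w$ of the pair $(q,d)$ as the linear function $\langle w, x_{(q,d)}\rangle$; the observed scores are Weighted Chamfer scores with respect to the hidden weights $w_*$. $\lambda_{\min}$ denotes the smallest eigenvalue. *)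

From HB Require Import structures.
From mathcomp Require Import all_boot all_order all_algebra.
From mathcomp Require Import all_classical all_reals.
From mathcomp Require Import ereal esum exp.
Set Implicit Arguments. Unset Strict Implicit. Unset Printing Implicit Defensive.
Import Order.TTheory GRing.Theory Num.Theory.
Local Open Scope classical_set_scope.
Local Open Scope ring_scope.

Section Defs.
Variable R : realType.

(* tokens are elements of 'I_T (i.e. [T] shifted to 0..T-1); a query-document
   pair is a pair of token sequences *)
Definition qd_pair (T : nat) := (seq 'I_T * seq 'I_T)%type.

Definition dotv (m : nat) (u v : 'rV[R]_m) : R := \sum_(k < m) u 0 k * v 0 k.

Definition max_seq (s : seq R) : R := foldl Num.max (head 0 s) s.

(* Encoders (possibly contextual): Eq q i is the unit vector assigned to the
   i-th position of query q, Ed d j the one assigned to the j-th position of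
   document d. *)
Definition unit_encoder (T m : nat) (E : seq 'I_T -> nat -> 'rV[R]_m) : Prop :=
  forall (s : seq 'I_T) (i : nat), (i < size s)%N -> dotv (E s i) (E s i) = 1.

Definition feature (T m : nat) (Eq Ed : seq 'I_T -> nat -> 'rV[R]_m)
  (z : qd_pair T) : 'rV[R]_T :=
  \row_(t < T) (if t \in z.1 then
     max_seq [seq dotv (Eq z.1 (index t z.1)) (Ed z.2 j) | j <- iota 0 (size z.2)]
   else 0).

Definition wchamfer (T : nat) (w x : 'rV[R]_T) : R := \sum_(t < T) w 0 t * x 0 t.

Definition is_distribution (T : nat) (D : qd_pair T -> R) : Prop :=
  (forall z, 0 <= D z) /\ \esum_(z in [set: qd_pair T]) (D z)%:E = 1%E.

Definition expect (T : nat) (D : qd_pair T -> R) (f : qd_pair T -> R) : R :=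
  fine (\esum_(z in [set: qd_pair T]) (D z * Num.max (f z) 0)%:E)
  - fine (\esum_(z in [set: qd_pair T]) (D z * Num.max (- f z) 0)%:E).

Definition second_moment (T m : nat) (Eq Ed : seq 'I_T -> nat -> 'rV[R]_m)
  (D : qd_pair T -> R) : 'M[R]_T :=
  \matrix_(i < T, j < T) expect D (fun z =>
     (size z.1)%:R^-1 * (feature Eq Ed z 0 i * feature Eq Ed z 0 j)).

Definition lambda_min (T : nat) (A : 'M[R]_T) : R := inf [set a : R | eigenvalue A a].

Definition prob_iid (T n : nat) (D : qd_pair T -> R) (P : n.-tuple (qd_pair T) -> Prop)
  : \bar R :=
  \esum_(s in [set s : n.-tuple (qd_pair T) | P s]) (\prod_(i < n) D (tnth s i))%:E.

End Defs.

(* The algorithm returns a weight vector consistent with all observed scores; it is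
   w_* as soon as the observed feature vectors span R^T.  If V is a subspace of rank
   r < T, pick T - r nonzero pairwise orthogonal vectors u_i orthogonal to V.  Bessel's
   inequality and |x|^2 <= len q give 1[x \notin V] >= (1/len q) sum_i <u_i,x>^2/|u_i|^2,
   whose expectation sum_i u_i A u_i^T / |u_i|^2 is at least (T - r) lambda_min(A) by the
   Rayleigh bound.  Hence each sample leaves the current span with probability at least
   (T - r) lambda_min(A), and by induction n samples fail to span R^T with probability at
   most T (1 - lambda_min(A))^n <= T exp(-lambda_min(A) n) <= delta as soon as
   n >= lambda_min(A)^-1 log(T/delta): the constant C = 1 works. *)

From HB Require Import structures.
From mathcomp Require Import all_boot all_order all_algebra.
From mathcomp Require Import all_classical all_reals.
From mathcomp Require Import ereal esum topology normedtype derive sequences exp.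
From mathcomp Require Import ring lra zify.
Import Order.TTheory GRing.Theory Num.Theory.
Local Open Scope classical_set_scope.
Local Open Scope ring_scope.

Section DotProduct.
Context {R : realType} {n : nat}.
Implicit Types u v w : 'rV[R]_n.

Lemma dotvC u v : dotv u v = dotv v u.
Proof. by apply: eq_bigr => k _; rewrite mulrC. Qed.

Lemma dotvE u v : dotv u v = (u *m v^T) 0 0.
Proof. by rewrite mxE; apply: eq_bigr => k _; rewrite mxE. Qed.

Lemma dotvDl u v w : dotv (u + v) w = dotv u w + dotv v w.
Proof. by rewrite !dotvE mulmxDl mxE. Qed.

Lemma dotvZl a u w : dotv (a *: u) w = a * dotv u w.
Proof. by rewrite !dotvE -scalemxAl mxE. Qed.

Lemma dotvBl u v w : dotv (u - v) w = dotv u w - dotv v w.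
Proof. by rewrite dotvDl -scaleN1r dotvZl mulN1r. Qed.

Lemma dotvDr u v w : dotv w (u + v) = dotv w u + dotv w v.
Proof. by rewrite dotvC dotvDl !(dotvC w). Qed.

Lemma dotvZr a u w : dotv w (a *: u) = a * dotv w u.
Proof. by rewrite dotvC dotvZl dotvC. Qed.

Lemma dotvBr u v w : dotv w (u - v) = dotv w u - dotv w v.
Proof. by rewrite dotvC dotvBl !(dotvC w). Qed.

Lemma dotv0l w : dotv 0 w = 0.
Proof. by rewrite -(scale0r 0) dotvZl mul0r. Qed.

Lemma dotv_ge0 u : 0 <= dotv u u.
Proof. by apply: sumr_ge0 => k _; rewrite -expr2 sqr_ge0. Qed.

Lemma dotv_eq0 u : (dotv u u == 0) = (u == 0).
Proof.
rewrite psumr_eq0 => [|k _]; last by rewrite -expr2 sqr_ge0.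
apply/allP/eqP => [u0|-> k _]; last by rewrite mxE mul0r eqxx.
apply/rowP => k; apply/eqP; rewrite mxE -sqrf_eq0 expr2.
exact: u0 k (mem_index_enum _).
Qed.

Lemma dotv_gt0 u : (0 < dotv u u) = (u != 0).
Proof. by rewrite lt_def dotv_eq0 dotv_ge0 andbT. Qed.

Lemma norm_dotv_le1 u v : dotv u u = 1 -> dotv v v = 1 -> `|dotv u v| <= 1.
Proof.
move=> u1 v1; have := dotv_ge0 (u - v); have := dotv_ge0 (u + v).
rewrite !dotvBl !dotvBr !dotvDl !dotvDr (dotvC v u) u1 v1 ler_norml.
by move=> ? ?; apply/andP; split; lra.
Qed.

End DotProduct.

Lemma norm_max_seq_le1 {R : realType} (s : seq R) :
  all (fun a => `|a| <= 1) s -> `|max_seq s| <= 1.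
Proof.
have foldl_le1 (a : R) t : `|a| <= 1 -> all (fun a => `|a| <= 1) t ->
    `|foldl Num.max a t| <= 1.
  by elim: t a => [//|b t IH] a a1 /andP[b1 t1] /=; apply: IH => //; case: (leP a b).
case: s => [|a s] s1; first by rewrite normr0.
by apply: foldl_le1 => //; case/andP: s1.
Qed.

Section Features.
Context {R : realType} {T m : nat} {Eq Ed : seq 'I_T -> nat -> 'rV[R]_m}.
Hypotheses (Eq_unit : unit_encoder Eq) (Ed_unit : unit_encoder Ed).
Local Notation x := (feature Eq Ed).

Lemma norm_feature_le1 z t : `|x z 0 t| <= 1.
Proof.
rewrite mxE; case: ifP => tz; last by rewrite normr0.
apply/norm_max_seq_le1/allP => y /mapP[j]; rewrite mem_iota add0n => jd ->.
by apply: norm_dotv_le1; [apply: Eq_unit; rewrite index_mem | exact: Ed_unit].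
Qed.

(* Coordinates of x outside the query vanish, so |x|^2 is at most the number of
   distinct query tokens. *)
Lemma dotv_feature_le_size z : dotv (x z) (x z) <= (size z.1)%:R.
Proof.
apply: (@le_trans _ _ (\sum_(t < T | t \in z.1) 1)); last first.
  by rewrite sumr_const ler_nat card_size.
rewrite big_mkcond /=; apply: ler_sum => t _.
have := norm_feature_le1 z t; rewrite mxE; case: ifP => _; last by rewrite mulr0.
by rewrite ler_norml => /andP[? ?]; nra.
Qed.

End Features.

Section ESumScale.
Context {R : realType} {I : choiceType}.
Local Open Scope ereal_scope.

Lemma esumZl (S : set I) (c : R) (a : I -> \bar R) : (0 <= c)%R ->
  (forall i, 0 <= a i) -> \esum_(i in S) (c%:E * a i) = c%:E * \esum_(i in S) a i.
Proof.
move=> c0 a0; rewrite /esum -ereal_supZl //; last first.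
  by apply/set0P; exists 0; exists set0; [exact: fsets_set0 | rewrite fsbig_set0].
congr ereal_sup; apply/seteqP; split => y /=.
  move=> [A fsA <-]; exists (\sum_(i \in A) a i); first by exists A.
  by case: fsA => finA _; rewrite !fsbig_finite // ge0_sume_distrr.
move=> [b [A fsA <-] <-]; exists A => //.
by case: fsA => finA _; rewrite !fsbig_finite // ge0_sume_distrr.
Qed.

End ESumScale.

Section Expectation.
Context {R : realType} {T : nat} {D : qd_pair T -> R}.
Hypothesis D_distr : is_distribution D.
Implicit Types (f g h : qd_pair T -> R) (M N : R).

Definition bounded_fun h := exists M, forall z, `|h z| <= M.

Lemma distr_ge0 z : 0 <= D z.
Proof. by case: D_distr. Qed.

Lemma esum_distr_cst c : 0 <= c ->
  (\esum_(z in [set: qd_pair T]) (D z * c)%:E = c%:E)%E.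
Proof.
move=> c0; under eq_esum do rewrite mulrC EFinM.
rewrite esumZl //; last by move=> z; rewrite lee_fin distr_ge0.
by case: D_distr => _ ->; rewrite mule1.
Qed.

Lemma expect_ge0E {h} : (forall z, 0 <= h z) ->
  expect D h = fine (\esum_(z in [set: qd_pair T]) (D z * h z)%:E).
Proof.
move=> h0; rewrite /expect.
have -> : (\esum_(z in [set: qd_pair T]) (D z * Num.max (- h z) 0)%:E = 0)%E.
  by apply: esum1 => z _; rewrite max_r ?oppr_le0 // mulr0.
by rewrite subr0; congr (fine _); apply: eq_esum => z _; rewrite max_l.
Qed.

Lemma expect_ge0 h : (forall z, 0 <= h z) -> 0 <= expect D h.
Proof.
move=> h0; rewrite expect_ge0E //; apply/fine_ge0/esum_ge0 => z _.
by rewrite lee_fin mulr_ge0 ?distr_ge0.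
Qed.

Lemma EFin_expect {h M} : (forall z, 0 <= h z <= M) ->
  (expect D h)%:E = (\esum_(z in [set: qd_pair T]) (D z * h z)%:E)%E.
Proof.
move=> hM; have h0 z : 0 <= h z by case/andP: (hM z).
have M0 : 0 <= M by case/andP: (hM (nil, nil)); exact: le_trans.
rewrite expect_ge0E // fineK // ge0_fin_numE; last first.
  by apply: esum_ge0 => z _; rewrite lee_fin mulr_ge0 ?distr_ge0.
apply: (@le_lt_trans _ _ M%:E); last exact: ltry.
rewrite -(esum_distr_cst _ M0); apply: le_esum => z _.
by rewrite lee_fin ler_wpM2l ?distr_ge0 //; case/andP: (hM z).
Qed.

Lemma expect_cst c : expect D (fun=> c) = c.
Proof.
have [c0|c0] := leP 0 c.
  by rewrite /expect max_l // max_r ?oppr_le0 // !esum_distr_cst // subr0.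
rewrite /expect max_r ?ltW // max_l ?oppr_ge0 ?ltW // !esum_distr_cst //.
  by rewrite sub0r opprK.
by rewrite oppr_ge0 ltW.
Qed.

Lemma expectD_ge0 {f g M N} : (forall z, 0 <= f z <= M) ->
  (forall z, 0 <= g z <= N) ->
  expect D (fun z => f z + g z) = expect D f + expect D g.
Proof.
move=> fM gN; have fgMN z : 0 <= f z + g z <= M + N.
  by case/andP: (fM z) => ? ?; case/andP: (gN z) => ? ?; rewrite addr_ge0 ?lerD.
apply: EFin_inj; rewrite [RHS]EFinD (EFin_expect fM) (EFin_expect gN).
rewrite (EFin_expect fgMN) -esumD.
- by apply: eq_esum => z _; rewrite mulrDr EFinD.
- by move=> z _; rewrite lee_fin mulr_ge0 ?distr_ge0 //; case/andP: (fM z).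
- by move=> z _; rewrite lee_fin mulr_ge0 ?distr_ge0 //; case/andP: (gN z).
Qed.

Lemma expectZ_ge0 {c f M} : 0 <= c -> (forall z, 0 <= f z <= M) ->
  expect D (fun z => c * f z) = c * expect D f.
Proof.
move=> c0 fM; have cfM z : 0 <= c * f z <= c * M.
  by case/andP: (fM z) => ? ?; rewrite mulr_ge0 ?ler_wpM2l.
apply: EFin_inj; rewrite [RHS]EFinM (EFin_expect fM) (EFin_expect cfM) -esumZl //.
- by apply: eq_esum => z _; rewrite mulrCA EFinM.
- by move=> z; rewrite lee_fin mulr_ge0 ?distr_ge0 //; case/andP: (fM z).
Qed.

Lemma shifted_range {h M} : (forall z, `|h z| <= M) ->
  forall z, 0 <= h z + M <= M + M.
Proof.
by move=> hM z; have := hM z; rewrite ler_norml => /andP[? ?]; apply/andP; split; lra.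
Qed.

(* With h^+ = max h 0 and h^- = max (-h) 0, the nonnegative functions h + M + h^- and
   h^+ + M coincide, and [expect] is additive on nonnegative bounded functions. *)
Lemma expect_shift {h M} : (forall z, `|h z| <= M) ->
  expect D h = expect D (fun z => h z + M) - M.
Proof.
move=> hM; have M0 : 0 <= M := le_trans (normr_ge0 _) (hM (nil, nil)).
pose hp z := Num.max (h z) 0; pose hn z := Num.max (- h z) 0.
have hp_range z : 0 <= hp z <= M.
  by rewrite le_max ge_max lexx orbT M0 andbT (le_trans (ler_norm _) (hM z)).
have hn_range z : 0 <= hn z <= M.
  by rewrite le_max ge_max lexx orbT M0 andbT (le_trans (ler_norm _)) // normrN.
have hpn : expect D h = expect D hp - expect D hn.
  have hp0 z : 0 <= hp z by case/andP: (hp_range z).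
  have hn0 z : 0 <= hn z by case/andP: (hn_range z).
  by rewrite (expect_ge0E hp0) (expect_ge0E hn0).
have split_h : (fun z => h z + M + hn z) = (fun z => hp z + M).
  apply/funext => z; rewrite /hp /hn; have [hz|hz] := leP 0 (h z).
    by rewrite max_r ?oppr_le0 // addr0.
  by rewrite max_l ?oppr_ge0 ?ltW //; lra.
have := congr1 (expect D) split_h.
rewrite (expectD_ge0 (shifted_range hM) hn_range).
have cM (z : qd_pair T) : 0 <= M <= M by rewrite M0 lexx.
rewrite (expectD_ge0 hp_range cM) expect_cst hpn => e; clear -e; lra.
Qed.

Lemma expectN h : expect D (fun z => - h z) = - expect D h.
Proof.
rewrite /expect opprB; congr (_ - fine _); apply: eq_esum => z _.
by rewrite opprK.
Qed.

Lemma expectD f g : bounded_fun f -> bounded_fun g ->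
  expect D (fun z => f z + g z) = expect D f + expect D g.
Proof.
move=> [M fM] [N gN]; have fgMN z : `|f z + g z| <= M + N.
  exact: le_trans (ler_normD _ _) (lerD (fM z) (gN z)).
rewrite (expect_shift fM) (expect_shift gN) (expect_shift fgMN).
have -> : (fun z => f z + g z + (M + N)) = (fun z => (f z + M) + (g z + N)).
  by apply/funext => z; rewrite addrACA.
rewrite (expectD_ge0 (shifted_range fM) (shifted_range gN)); lra.
Qed.

Lemma expectZ c f : bounded_fun f -> expect D (fun z => c * f z) = c * expect D f.
Proof.
move=> [M fM]; wlog c0 : c / 0 <= c => [W|].
  have [|c0] := leP 0 c; first exact: W.
  have -> : (fun z => c * f z) = (fun z => - ((- c) * f z)).
    by apply/funext => z; rewrite mulNr opprK.
  by rewrite expectN W ?oppr_ge0 ?ltW // mulNr opprK.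
have cfM z : `|c * f z| <= c * M by rewrite normrM ger0_norm ?ler_wpM2l.
rewrite (expect_shift fM) (expect_shift cfM) mulrBr.
rewrite -(expectZ_ge0 c0 (shifted_range fM)).
by congr (expect D _ - _); apply/funext => z; rewrite mulrDr.
Qed.

Lemma bounded_fun_sum {I : Type} (r : seq I) {F : I -> qd_pair T -> R} :
  (forall i, bounded_fun (F i)) -> bounded_fun (fun z => \sum_(i <- r) F i z).
Proof.
move=> bF; elim: r => [|i r [M FM]]; first by exists 0 => z; rewrite big_nil normr0.
have [N FiN] := bF i; exists (N + M) => z; rewrite big_cons.
exact: le_trans (ler_normD _ _) (lerD (FiN z) (FM z)).
Qed.

Lemma expect_sum (I : Type) (r : seq I) (F : I -> qd_pair T -> R) :
  (forall i, bounded_fun (F i)) ->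
  expect D (fun z => \sum_(i <- r) F i z) = \sum_(i <- r) expect D (F i).
Proof.
move=> bF; elim: r => [|i r IH].
  by under [X in expect D X]funext do rewrite big_nil; rewrite big_nil expect_cst.
under [X in expect D X]funext do rewrite big_cons.
by rewrite expectD ?IH ?big_cons //; exact: bounded_fun_sum.
Qed.

Lemma ler_expect {f g} : bounded_fun f -> bounded_fun g -> (forall z, f z <= g z) ->
  expect D f <= expect D g.
Proof.
move=> bf bg fg; have bNf : bounded_fun (fun z => - f z).
  by case: bf => M fM; exists M => z; rewrite normrN.
by rewrite -subr_ge0 -expectN -expectD //; apply: expect_ge0 => z; rewrite subr_ge0.
Qed.

End Expectation.

Section IidProbability.
Context {R : realType} {T : nat} {D : qd_pair T -> R}.
Hypothesis D_distr : is_distribution D.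
Local Open Scope ereal_scope.

Lemma prod_distr_ge0 n (s : n.-tuple (qd_pair T)) :
  (0 <= \prod_(i < n) D (tnth s i))%R.
Proof. by apply: prodr_ge0 => i _; exact: distr_ge0. Qed.

Lemma prob_iid_ge0 {n} (P : n.-tuple (qd_pair T) -> Prop) : 0 <= prob_iid D P.
Proof. by apply: esum_ge0 => s _; rewrite lee_fin prod_distr_ge0. Qed.

Lemma le_prob_iid {n} (P Q : n.-tuple (qd_pair T) -> Prop) :
  (forall s, P s -> Q s) -> prob_iid D P <= prob_iid D Q.
Proof.
move=> PQ; rewrite /prob_iid (esum_mkcond [set s | P s]) (esum_mkcond [set s | Q s]).
apply: le_esum => s _; case: ifPn => Ps; rewrite ?inE /= in Ps.
  by rewrite ifT ?inE //=; exact: PQ.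
by case: ifPn => _; rewrite ?lee_fin ?prod_distr_ge0.
Qed.

Lemma prob_iid_set0 {n} (P : n.-tuple (qd_pair T) -> Prop) :
  (forall s, ~ P s) -> prob_iid D P = 0.
Proof.
move=> nP; rewrite /prob_iid (_ : [set s | P s] = set0) ?esum_set0 //.
by apply/seteqP; split => s // /nP.
Qed.

(* Fubini for the first sample: the (n+1)-fold product of D is D times the n-fold one. *)
Lemma prob_iid_cons {n} (P : n.+1.-tuple (qd_pair T) -> Prop) :
  prob_iid D P = \esum_(z in [set: qd_pair T])
    ((D z)%:E * prob_iid D (fun s : n.-tuple _ => P [tuple of z :: s])).
Proof.
rewrite /prob_iid.
pose J z := [set s : n.-tuple (qd_pair T) | P [tuple of z :: s]].
pose e (k : qd_pair T * n.-tuple (qd_pair T)) := [tuple of k.1 :: k.2].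
rewrite (reindex_esum ([set: qd_pair T] `*`` J) _ e); last first.
  split.
  - by move=> [z s] [_ /=]; rewrite /J /=.
  - move=> [z s] [z' s'] _ _ /(congr1 val) /= [-> ss'].
    by congr pair; apply: val_inj.
  - move=> s /= Ps; exists (thead s, behead_tuple s) => //=.
      by split => //; rewrite /J /= -tuple_eta.
    by rewrite /e /= -tuple_eta.
under eq_esum => k _ do rewrite /e big_ord_recl tnth0.
rewrite -(esum_esum (a := fun z (s : n.-tuple (qd_pair T)) =>
  (D z * \prod_(i < n) D (tnth [tuple of z :: s] (lift ord0 i)))%:E)) /=; last first.
  move=> z s _ _; rewrite lee_fin mulr_ge0 ?distr_ge0 ?prodr_ge0 // => i _.
  exact: distr_ge0.
apply: eq_esum => z _; rewrite -esumZl ?lee_fin ?distr_ge0 //; last first.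
  by move=> s; rewrite lee_fin prod_distr_ge0.
apply: eq_esum => s _; rewrite EFinM; congr (_ * _)%:E.
by apply: eq_bigr => i _; rewrite tnthS.
Qed.

Lemma prob_iid_True n : prob_iid D (fun _ : n.-tuple (qd_pair T) => True) = 1.
Proof.
elim: n => [|n IH].
  rewrite /prob_iid (_ : [set s | True] = [set [tuple]]).
    by rewrite esum_set1 big_ord0 // lee_fin.
  by apply/seteqP; split => s // _; rewrite (tuple0 s).
rewrite prob_iid_cons; under eq_esum do rewrite IH mule1.
by case: D_distr.
Qed.

Lemma prob_iid_le1 {n} (P : n.-tuple (qd_pair T) -> Prop) : prob_iid D P <= 1.
Proof. by rewrite -(prob_iid_True n); apply: le_prob_iid. Qed.

Lemma prob_iid_compl {n} (P : n.-tuple (qd_pair T) -> Prop) :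
  prob_iid D P + prob_iid D (fun s => ~ P s) = 1.
Proof.
rewrite -(prob_iid_True n) /prob_iid [RHS](esumID [set s | P s]); last first.
  by move=> s _; rewrite lee_fin prod_distr_ge0.
by congr (_ + _); congr esum; apply/seteqP; split => s /= //; case.
Qed.

Lemma prob_iid_compl_ge {n} (P : n.-tuple (qd_pair T) -> Prop) (e : R) :
  prob_iid D P <= e%:E -> (1 - e)%:E <= prob_iid D (fun s => ~ P s).
Proof.
have fin_prob (Q : n.-tuple (qd_pair T) -> Prop) :
    prob_iid D Q = (fine (prob_iid D Q))%:E.
  rewrite fineK // ge0_fin_numE ?prob_iid_ge0 //.
  exact: le_lt_trans (prob_iid_le1 Q) (ltry 1).
have compl : (fine (prob_iid D P) + fine (prob_iid D (fun s => ~ P s)) = 1)%R.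
  by apply: EFin_inj; rewrite EFinD -!fin_prob prob_iid_compl.
rewrite (fin_prob (fun s => ~ P s)) (fin_prob P) !lee_fin; lra.
Qed.

End IidProbability.

Section RowSpans.
Context {R : realType} {n : nat}.
Implicit Types (V K : 'M[R]_n) (x u w : 'rV[R]_n) (xs : seq 'rV[R]_n).

Definition mxspan xs : 'M[R]_n := (\sum_(x <- xs) <<x>>)%MS.

Lemma mxrank_adds_row V x : \rank (V + x)%MS = (\rank V + ~~ (x <= V)%MS)%N.
Proof.
case: (boolP (x <= V)%MS) => xV /=; first by rewrite (addsmx_idPl xV) addn0.
apply/eqP; rewrite eqn_leq; apply/andP; split.
  by apply: leq_trans (mxrank_adds_leqif V x) _; rewrite leq_add2l rank_rV leq_b1.
rewrite addn1; apply: rank_ltmx.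
by rewrite ltmxE addsmxSl addsmx_sub submx_refl (negPf xV).
Qed.

Lemma mxrank_adds_mxspan_cons V x xs :
  \rank (V + mxspan (x :: xs))%MS = \rank ((V + x) + mxspan xs)%MS.
Proof.
rewrite /mxspan big_cons addsmxA; apply/eqmx_rank/eqmxP.
by apply: adds_eqmx => //; apply: adds_eqmx => //; exact: genmxE.
Qed.

Lemma mxspan_sub xs K : (forall x, x \in xs -> (x <= K)%MS) -> (mxspan xs <= K)%MS.
Proof.
rewrite /mxspan; elim: xs => [|x xs IH] xsK; first by rewrite big_nil sub0mx.
rewrite big_cons addsmx_sub genmxE xsK ?mem_head //=.
by apply: IH => y yxs; apply: xsK; rewrite inE yxs orbT.
Qed.

Lemma dotv_kermx {p} {V : 'M[R]_(p, n)} {u y} :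
  (V <= kermx u^T)%MS -> (y <= V)%MS -> dotv y u = 0.
Proof.
move=> Vu yV; have := submx_trans yV Vu; rewrite sub_kermx => /eqP yu.
by rewrite dotvE yu mxE.
Qed.

Lemma orthogonal_family {r V} : (\rank V + r)%N = n ->
  exists us : seq 'rV[R]_n, [/\ size us = r, all (fun u => u != 0) us,
    (forall u, u \in us -> (V <= kermx u^T)%MS) &
    pairwise (fun u v => dotv u v == 0) us].
Proof.
elim: r V => [|r IH] V rVr; first by exists [::].
have kerV_nz : kermx V^T != 0.
  by rewrite -mxrank_eq0 mxrank_ker mxrank_tr; apply/eqP; lia.
set u := nz_row (kermx V^T).
have u_nz : u != 0 by rewrite nz_row_eq0.
have V_orth_u : (V <= kermx u^T)%MS.
  have := nz_row_sub (kermx V^T); rewrite -/u sub_kermx => /eqP uV.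
  by rewrite sub_kermx -(trmxK V) -trmx_mul uV trmx0.
have uV : ~~ (u <= V)%MS.
  by apply: contra u_nz => uV; rewrite -dotv_eq0 (dotv_kermx V_orth_u uV).
have [|us [size_us us_nz us_orth us_pw]] := IH (V + u)%MS.
  by rewrite mxrank_adds_row uV; lia.
exists (u :: us); split => /=; [by rewrite size_us | by rewrite u_nz us_nz | |].
- move=> v; rewrite inE => /predU1P[-> //|vus].
  by have := us_orth v vus; rewrite addsmx_sub => /andP[].
- rewrite us_pw andbT; apply/allP => v vus; have := us_orth v vus.
  by rewrite addsmx_sub => /andP[_ uv]; rewrite (dotv_kermx uv (submx_refl u)).
Qed.

Lemma bessel_ineq us x : all (fun u => u != 0) us ->
  pairwise (fun u v => dotv u v == 0) us ->
  \sum_(u <- us) dotv u x ^+ 2 / dotv u u <= dotv x x.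
Proof.
elim: us x => [|u us IH] x /=; first by rewrite big_nil dotv_ge0.
move=> /andP[u_nz us_nz] /andP[u_orth us_pw]; rewrite big_cons.
have uu_nz : dotv u u != 0 by rewrite dotv_eq0.
pose y := x - (dotv u x / dotv u u) *: u.
have pythagoras : dotv x x = dotv u x ^+ 2 / dotv u u + dotv y y.
  by rewrite /y !dotvBl !dotvBr !dotvZl !dotvZr (dotvC x u); field.
have -> : \sum_(v <- us) dotv v x ^+ 2 / dotv v v =
          \sum_(v <- us) dotv v y ^+ 2 / dotv v v.
  apply: eq_big_seq => v vus; have /eqP := allP u_orth v vus.
  by rewrite /y dotvBr dotvZr dotvC => ->; rewrite mulr0 subr0.
by rewrite pythagoras lerD2l IH.
Qed.

Lemma eq_of_mxspan_full {xs w w'} : \rank (mxspan xs) = n ->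
  (forall x, x \in xs -> dotv w x = dotv w' x) -> w = w'.
Proof.
move=> full ww'; apply/eqP; rewrite -subr_eq0; apply/eqP.
have span_ker : (mxspan xs <= kermx (w - w')^T)%MS.
  apply: mxspan_sub => x xxs; rewrite sub_kermx; apply/eqP/rowP => i.
  by rewrite ord1 -dotvE dotvC dotvBl ww' // subrr mxE.
have : (1%:M <= kermx (w - w')^T)%MS.
  by apply: submx_trans span_ker; rewrite sub1mx /row_full full.
by rewrite sub_kermx mul1mx => /eqP /(congr1 trmx); rewrite trmxK trmx0.
Qed.

End RowSpans.

Lemma linear_coef_eq0 {R : realFieldType} (a b : R) :
  (forall t, 0 <= t * a + t ^+ 2 * b) -> a = 0.
Proof.
move=> ge0; set k := `|b| + 1.
have k_gt0 : 0 < k by rewrite /k ltr_pwDr // normr_ge0.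
have b_le : b <= `|b| := ler_norm b.
have := ge0 (- a / k).
have -> : - a / k * a + (- a / k) ^+ 2 * b = (a * a) * (b - k) / (k * k).
  by field; rewrite gt_eqF.
rewrite pmulr_lge0 ?invr_gt0 ?mulr_gt0 // => aab.
have aa_le0 : a * a <= 0 by rewrite /k in aab; nra.
by apply/eqP; rewrite -sqrf_eq0 expr2 eq_le aa_le0 -expr2 sqr_ge0.
Qed.

Section Rayleigh.
Context {R : realType} {n : nat} {M : 'M[R]_n}.
Local Notation quad u := (dotv (u *m M) u).

Let continuous_mul (f g : 'rV[R^o]_n -> R^o) :
  continuous f -> continuous g -> continuous (fun u => f u * g u).
Proof. by move=> cf cg u; exact: continuousM (cf u) (cg u). Qed.

Lemma continuous_quadform : continuous (fun u : 'rV[R^o]_n => quad u : R^o).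
Proof.
rewrite /dotv; under [X in continuous X]funext do under eq_bigr do rewrite mxE.
apply: continuous_big => [|k _]; first exact: add_continuous.
apply: continuous_mul; last exact: coord_continuous.
apply: continuous_big => [|j _]; first exact: add_continuous.
by apply: continuous_mul; [exact: coord_continuous | exact: cst_continuous].
Qed.

Lemma continuous_sqnorm : continuous (fun u : 'rV[R^o]_n => dotv u u : R^o).
Proof.
apply: continuous_big => [|k _]; first exact: add_continuous.
by apply: continuous_mul; exact: coord_continuous.
Qed.

Lemma exists_quadform_min : (0 < n)%N ->
  exists2 c : 'rV[R]_n, dotv c c = 1 &
    forall v : 'rV[R]_n, dotv v v = 1 -> quad c <= quad v.
Proof.
move=> n_gt0; pose S := [set u : 'rV[R^o]_n | (dotv u u : R^o) = 1].
have S_nz : S !=set0.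
  exists (\row_(j < n) ((j == Ordinal n_gt0)%:R : R^o)); rewrite /S /= /dotv.
  rewrite (bigD1 (Ordinal n_gt0)) //= big1 ?mxE ?eqxx ?mulr1 ?addr0 //.
  by move=> k k_neq; rewrite mxE (negPf k_neq) mulr0.
have S_compact : compact S.
  apply: bounded_closed_compact.
    apply: filterS (nbhs_pinfty_ge (num_real 1)) => b b_ge1 u Su.
    apply: le_trans b_ge1; rewrite [leLHS]/Num.norm /= mx_normrE.
    apply: bigmax_le => // -[i j] _ /=; rewrite ord1.
    have : u 0 j * u 0 j <= 1.
      rewrite -Su /dotv (bigD1 j) //= lerDl; apply: sumr_ge0 => k _.
      by rewrite -expr2 sqr_ge0.
    by rewrite ler_norml => ?; apply/andP; split; nra.
  rewrite (_ : S = (fun u => dotv u u : R^o) @^-1` [set 1]) //.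
  by apply: preimage_closed => [u _|]; [exact: continuous_sqnorm | exact: closed_eq].
have [c Sc c_min] := compact_EVT_min S_nz S_compact
  (continuous_subspaceT continuous_quadform).
by exists c => [|v Sv]; [move: Sc; rewrite inE | apply: c_min; rewrite inE].
Qed.

Lemma quadformZ a v : quad (a *: v) = a * a * quad v.
Proof. by rewrite -scalemxAl dotvZl dotvZr mulrA. Qed.

Hypothesis M_sym : M^T = M.

Lemma quadform_sym a b : dotv (a *m M) b = dotv (b *m M) a.
Proof.
rewrite !dotvE; have -> : a *m M *m b^T = (b *m M *m a^T)^T.
  by rewrite !trmx_mul trmxK M_sym mulmxA.
by rewrite mxE.
Qed.

Section Minimizer.
Variable c : 'rV[R]_n.
Hypothesis c_min : forall v : 'rV[R]_n, dotv v v = 1 -> quad c <= quad v.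

Lemma quadform_ge_min v : quad c * dotv v v <= quad v.
Proof.
have [->|v_nz] := eqVneq v 0; first by rewrite dotv0l mul0mx dotv0l mulr0.
have vv_gt0 : 0 < dotv v v by rewrite dotv_gt0.
pose s := Num.sqrt (dotv v v).
have s_gt0 : 0 < s by rewrite sqrtr_gt0.
have ss : dotv v v = s * s by rewrite -expr2 sqr_sqrtr // ltW.
have -> : quad v = quad (s^-1 *: v) * (s * s).
  by rewrite quadformZ; field; rewrite gt_eqF.
rewrite ss ler_pM2r ?mulr_gt0 //; apply: c_min.
by rewrite dotvZl dotvZr mulrA ss; field; rewrite gt_eqF.
Qed.

Hypothesis c_unit : dotv c c = 1.

(* First variation of the Rayleigh quotient at its minimum along the direction [w]. *)
Lemma minimizer_orth w : dotv (w *m M) c = quad c * dotv w c.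
Proof.
apply/eqP; rewrite -subr_eq0; apply/eqP.
suff : 2 * (dotv (w *m M) c - quad c * dotv w c) = 0.
  by move=> /eqP; rewrite mulf_eq0 pnatr_eq0 /= => /eqP.
apply: (@linear_coef_eq0 _ _ (quad w - quad c * dotv w w)) => t.
have := quadform_ge_min (c + t *: w).
rewrite mulmxDl -scalemxAl !dotvDl !dotvDr !dotvZl !dotvZr c_unit.
rewrite (quadform_sym c w) (dotvC c w) expr2; nra.
Qed.

Lemma minimizer_eigen : c *m M = quad c *: c.
Proof.
apply/eqP; rewrite -subr_eq0 -dotv_eq0 dotvBl dotvZl quadform_sym minimizer_orth.
by rewrite !(dotvC c) subrr.
Qed.

End Minimizer.

Arguments quadform_ge_min {c}.
Arguments minimizer_eigen {c}.

Lemma lambda_min_quadform_le : (0 < n)%N ->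
  forall u, lambda_min M * dotv u u <= quad u.
Proof.
move=> n_gt0 u; have [c c_unit c_min] := exists_quadform_min n_gt0.
have ge_min := quadform_ge_min c_min.
have eig_ge a : eigenvalue M a -> quad c <= a.
  case/eigenvalueP => v va v_nz; have := ge_min v.
  by rewrite va dotvZl ler_pM2r ?dotv_gt0.
have c_eig : eigenvalue M (quad c).
  apply/eigenvalueP; exists c; first exact: minimizer_eigen c_min c_unit.
  by rewrite -dotv_gt0 c_unit.
apply: le_trans (ge_min u).
by rewrite ler_wpM2r ?dotv_ge0 //; apply: ge_inf => //; exists (quad c).
Qed.

End Rayleigh.

Lemma invr_natr_range {F : numFieldType} k : 0 <= (k%:R : F)^-1 <= 1.
Proof.
case: k => [|k]; first by rewrite invr0 lexx ler01.
by rewrite invr_ge0 ler0n /= invf_le1 ?ltr0Sn // ler1n.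
Qed.

Lemma sumr_const_seq {V : nmodType} {I : Type} (s : seq I) (c : V) :
  \sum_(i <- s) c = c *+ size s.
Proof.
by rewrite big_const_seq count_predT; elim: (size s) => //= k ->; rewrite mulrS.
Qed.

Section Recovery.
Context {R : realType} {T m : nat} {Eq Ed : seq 'I_T -> nat -> 'rV[R]_m}.
Context {D : qd_pair T -> R}.
Hypotheses (Eq_unit : unit_encoder Eq) (Ed_unit : unit_encoder Ed).
Hypotheses (D_distr : is_distribution D) (T_gt0 : (0 < T)%N).
Local Notation x := (feature Eq Ed).
Local Notation A := (second_moment Eq Ed D).
Local Notation lambda := (lambda_min A).

Lemma second_moment_sym : A^T = A.
Proof.
apply/matrixP => i j; rewrite !mxE; congr expect; apply/funext => z.
by rewrite mulrC [in RHS]mulrC (mulrC (x z 0 i)).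
Qed.

(* For an empty query the weight [(size z.1)%:R^-1] is 0^-1 = 0. *)
Definition weighted_sq (u : 'rV[R]_T) (z : qd_pair T) :=
  (size z.1)%:R^-1 * dotv u (x z) ^+ 2.

Lemma bounded_weighted_sq u : bounded_fun (weighted_sq u).
Proof.
exists ((\sum_j `|u 0 j|) ^+ 2) => z.
have /andP[l_ge0 l_le1] := invr_natr_range (F := R) (size z.1).
have ux : `|dotv u (x z)| <= \sum_j `|u 0 j|.
  apply: le_trans (ler_norm_sum _ _ _) (ler_sum _ _) => j _.
  by rewrite normrM ler_piMr // norm_feature_le1.
rewrite normrM ger0_norm // normrX; apply: le_trans (ler_piMl _ l_le1) _.
  exact: exprn_ge0.
by rewrite lerXn2r ?nnegrE ?sumr_ge0.
Qed.

Lemma quadform_second_moment u : dotv (u *m A) u = expect D (weighted_sq u).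
Proof.
pose f j k z := (size z.1)%:R^-1 * (x z 0 j * x z 0 k).
have f_bdd j k : bounded_fun (f j k).
  exists 1 => z; have /andP[l_ge0 l_le1] := invr_natr_range (F := R) (size z.1).
  by rewrite normrM ger0_norm // mulr_ile1 // normrM mulr_ile1 // norm_feature_le1.
have uf_bdd j k : bounded_fun (fun z => u 0 j * u 0 k * f j k z).
  case: (f_bdd j k) => b fb; exists (`|u 0 j * u 0 k| * b) => z.
  by rewrite normrM ler_wpM2l.
have -> : weighted_sq u = (fun z => \sum_k \sum_j u 0 j * u 0 k * f j k z).
  apply/funext => z; rewrite /weighted_sq /dotv expr2 mulr_suml mulr_sumr.
  apply: eq_bigr => k _; rewrite !mulr_sumr; apply: eq_bigr => j _; rewrite /f; ring.
rewrite expect_sum // => [|k]; last exact: bounded_fun_sum.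
rewrite /dotv; apply: eq_bigr => k _; rewrite expect_sum // mxE mulr_suml.
by apply: eq_bigr => j _; rewrite expectZ // mxE /f; ring.
Qed.

Definition escape (V : 'M[R]_T) (z : qd_pair T) : R := (~~ (x z <= V)%MS)%:R.

Definition escape_prob (V : 'M[R]_T) := expect D (escape V).

Lemma escape_range V z : 0 <= escape V z <= 1.
Proof. by rewrite /escape; case: (~~ _); rewrite ?lexx ?ler01. Qed.

Lemma bounded_escape V : bounded_fun (escape V).
Proof. by exists 1 => z; have /andP[? ?] := escape_range V z; rewrite ger0_norm. Qed.

(* Bessel's inequality, then |x|^2 <= len q. *)
Lemma weighted_sq_orth_le {V us} z : all (fun u => u != 0) us ->
  pairwise (fun u v => dotv u v == 0) us ->
  (forall u, u \in us -> (V <= kermx u^T)%MS) ->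
  \sum_(u <- us) (dotv u u)^-1 * weighted_sq u z <= escape V z.
Proof.
move=> us_nz us_pw us_orth; rewrite /escape.
have [xV|xV] /= := boolP (x z <= V)%MS.
  rewrite big_seq big1 // => u uus.
  by rewrite /weighted_sq (dotvC u) (dotv_kermx (us_orth u uus) xV) expr0n /= !mulr0.
have -> : \sum_(u <- us) (dotv u u)^-1 * weighted_sq u z =
    (size z.1)%:R^-1 * \sum_(u <- us) dotv u (x z) ^+ 2 / dotv u u.
  by rewrite mulr_sumr; apply: eq_bigr => u _; rewrite /weighted_sq; ring.
have /andP[l_ge0 _] := invr_natr_range (F := R) (size z.1).
apply: le_trans (ler_wpM2l l_ge0 (bessel_ineq _ (x z) us_nz us_pw)) _.
have := dotv_feature_le_size Eq_unit Ed_unit z.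
case: (size z.1) => [|k] xx; first by rewrite invr0 mul0r.
by rewrite ler_pdivrMl ?ltr0Sn // mulr1.
Qed.

Lemma escape_prob_ge V : (T - \rank V)%:R * lambda <= escape_prob V.
Proof.
have rVT : (\rank V + (T - \rank V))%N = T by have := rank_leq_col V; lia.
have [us [size_us us_nz us_orth us_pw]] := orthogonal_family rVT.
pose g u z := (dotv u u)^-1 * weighted_sq u z.
have g_bdd u : bounded_fun (g u).
  case: (bounded_weighted_sq u) => b wb.
  by exists (`|(dotv u u)^-1| * b) => z; rewrite normrM ler_wpM2l.
apply: le_trans (ler_expect D_distr (bounded_fun_sum us g_bdd) (bounded_escape V)
  (fun z => weighted_sq_orth_le z us_nz us_pw us_orth)).
rewrite (expect_sum D_distr) // -size_us mulr_natl -sumr_const_seq.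
rewrite big_seq [leRHS]big_seq; apply: ler_sum => u uus.
have uu_gt0 : 0 < dotv u u by rewrite dotv_gt0 (allP us_nz).
have := lambda_min_quadform_le second_moment_sym T_gt0 u.
rewrite quadform_second_moment (expectZ D_distr _ (weighted_sq u)).
  by rewrite ler_pdivlMl // mulrC.
exact: bounded_weighted_sq.
Qed.

Lemma escape_prob_le1 V : escape_prob V <= 1.
Proof.
rewrite -(expect_cst D_distr 1); apply: ler_expect (bounded_escape V) _ _ => //.
  by exists 1 => z; rewrite normr1.
by move=> z; case/andP: (escape_range V z).
Qed.

Lemma lambda_min_le1 : lambda <= 1.
Proof.
have := escape_prob_ge 0; rewrite mxrank0 subn0 => T_lambda.
have [l_le0|l_gt0] := leP lambda 0; first exact: le_trans l_le0 ler01.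
apply: le_trans (escape_prob_le1 0); apply: le_trans T_lambda.
by rewrite ler_pMl // ler1n.
Qed.

Lemma rank_gap_adds_feature V z :
  (T - \rank (V + x z)%MS)%:R = (T - \rank V)%:R - escape V z.
Proof.
have := rank_leq_col (V + x z)%MS; rewrite mxrank_adds_row /escape.
by case: (~~ _) => /= rVx; rewrite ?addn0 ?subr0 // subnDA natrB //; lia.
Qed.

Lemma expect_rank_gap V :
  expect D (fun z => (T - \rank (V + x z)%MS)%:R) = (T - \rank V)%:R - escape_prob V.
Proof.
under [X in expect D X]funext do rewrite rank_gap_adds_feature.
rewrite (expectD D_distr (fun=> _) (fun z => - escape V z)) ?expect_cst ?expectN //.
  by exists (T - \rank V)%:R => z; rewrite ger0_norm.
by case: (bounded_escape V) => b eb; exists b => z; rewrite normrN.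
Qed.

(* A fresh sample raises the rank of V by one with probability [escape_prob V],
   which is at least (T - rank V) lambda. *)
Lemma prob_not_spanning n (V : 'M[R]_T) :
  (prob_iid D (fun s : n.-tuple (qd_pair T) => (\rank (V + mxspan (map x s))%MS < T)%N)
    <= ((T - \rank V)%:R * (1 - lambda) ^+ n)%:E)%E.
Proof.
have q_ge0 : 0 <= 1 - lambda by rewrite subr_ge0 lambda_min_le1.
elim: n V => [|n IH] V.
  have [rV|rV] := ltnP (\rank V) T.
    apply: le_trans (prob_iid_le1 D_distr _) _.
    by rewrite expr0 mulr1 lee_fin ler1n subn_gt0.
  rewrite prob_iid_set0 ?lee_fin ?mulr_ge0 ?exprn_ge0 // => s.
  by rewrite (tuple0 s) /= /mxspan big_nil addsmx0 ltnNge rV.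
set qn := (1 - lambda) ^+ n; have qn_ge0 : 0 <= qn by rewrite exprn_ge0.
have gap_range z : 0 <= qn * (T - \rank (V + x z)%MS)%:R <= qn * T%:R.
  by rewrite mulr_ge0 ?ler_wpM2l ?ler_nat ?leq_subr.
rewrite prob_iid_cons //; apply: (@le_trans _ _
  (\esum_(z in [set: qd_pair T]) (D z * (qn * (T - \rank (V + x z)%MS)%:R))%:E)%E).
  apply: le_esum => z _; rewrite EFinM lee_wpmul2l ?lee_fin ?distr_ge0 // mulrC.
  apply: le_trans _ (IH (V + x z)%MS).
  by apply: (le_prob_iid D_distr) => s; rewrite /= mxrank_adds_mxspan_cons.
rewrite -(EFin_expect D_distr gap_range) lee_fin (expectZ D_distr); last first.
  by exists T%:R => z; rewrite ger0_norm // ler_nat leq_subr.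
have esc_ge := escape_prob_ge V.
by rewrite expect_rank_gap exprS -/qn mulrA [leRHS]mulrC ler_wpM2l //; lra.
Qed.

Lemma prob_rank_deficient n :
  (prob_iid D (fun s : n.-tuple (qd_pair T) => (\rank (mxspan (map x s)) < T)%N)
    <= (T%:R * (1 - lambda) ^+ n)%:E)%E.
Proof.
have := prob_not_spanning n 0; rewrite mxrank0 subn0 => bound.
by apply: le_trans _ bound; apply: (le_prob_iid D_distr) => s; rewrite adds0mx.
Qed.

End Recovery.

Definition consistent_weights {R : realType} (T : nat) (l : seq ('rV[R]_T * R)) :
  'rV[R]_T := xget 0 [set w | forall p, p \in l -> dotv w p.1 = p.2].

Lemma consistent_weights_full {R : realType} {T : nat} (l : seq ('rV[R]_T * R)) w :
  \rank (mxspan (map fst l)) = T -> (forall p, p \in l -> dotv w p.1 = p.2) ->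
  consistent_weights T l = w.
Proof.
move=> full wl; rewrite /consistent_weights; case: xgetP => [w' -> w'l|]; last first.
  by move/(_ w).
apply: (eq_of_mxspan_full full) => _ /mapP[p pl ->].
by rewrite w'l // wl.
Qed.

Lemma sample_size_bound {R : realType} (T n : nat) (lambda delta : R) :
  (0 < T)%N -> 0 < lambda <= 1 -> 0 < delta < 1 ->
  1 / lambda * ln (T%:R / delta) <= n%:R -> T%:R * (1 - lambda) ^+ n <= delta.
Proof.
move=> T_gt0 /andP[l_gt0 l_le1] /andP[d_gt0 d_lt1] n_ge.
have T_pos : 0 < T%:R :> R by rewrite ltr0n.
have Td_gt0 : 0 < T%:R / delta by rewrite divr_gt0.
have ln_le : ln (T%:R / delta) <= lambda * n%:R.
  by rewrite -(ler_pM2l l_gt0) mulrA div1r mulfV ?gt_eqF // mul1r in n_ge.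
have decay : (1 - lambda) ^+ n <= expR (- (lambda * n%:R)).
  rewrite -mulNr expRM_natr; apply: lerXn2r; rewrite ?nnegrE ?subr_ge0 ?expR_ge0 //.
  exact: expR_ge1Dx.
have : expR (- (lambda * n%:R)) <= delta / T%:R.
  by rewrite -[X in _ <= X]invf_div -[X in _ <= X^-1]lnK ?posrE // -expRN ler_expR lerN2.
by rewrite -ler_pdivlMl // (mulrC T%:R^-1) => exp_le; exact: le_trans decay exp_le.
Qed.

Theorem theorem1 (R : realType) :
  exists C : R, 0 < C /\
  exists alg : forall T : nat, seq ('rV[R]_T * R) -> 'rV[R]_T,
  forall (T m : nat) (Eq Ed : seq 'I_T -> nat -> 'rV[R]_m)
         (D : qd_pair T -> R) (wstar : 'rV[R]_T) (delta : R) (n : nat),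
    (0 < T)%N ->
    unit_encoder Eq -> unit_encoder Ed ->
    is_distribution D ->
    (forall z : qd_pair T, D z != 0 ->
        [&& (0 < size z.1)%N, (0 < size z.2)%N & uniq z.1]) ->
    0 < lambda_min (second_moment Eq Ed D) ->
    0 < delta < 1 ->
    C / lambda_min (second_moment Eq Ed D) * ln (T%:R / delta) <= n%:R ->
    ((1 - delta)%:E <=
      prob_iid D (fun s : n.-tuple (qd_pair T) =>
        alg T [seq (feature Eq Ed z, wchamfer wstar (feature Eq Ed z)) | z <- s]
        = wstar))%E.
Proof.
exists 1; split=> //; exists consistent_weights.
move=> T m Eq Ed D wstar delta n T_gt0 Eq_unit Ed_unit D_distr _ l_gt0 delta01 n_ge.
have l_le1 := lambda_min_le1 Eq_unit Ed_unit D_distr T_gt0.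
pose rank_deficient (s : n.-tuple (qd_pair T)) :=
  (\rank (mxspan (map (feature Eq Ed) s)) < T)%N.
apply: le_trans (le_prob_iid D_distr (fun s => ~ rank_deficient s) _ _); last first.
  move=> s /negP; rewrite /rank_deficient -leqNgt => full.
  apply: consistent_weights_full.
    by apply/eqP; rewrite eqn_leq rank_leq_col -map_comp.
  by move=> _ /mapP[z _ ->].
apply: prob_iid_compl_ge => //.
apply: le_trans (prob_rank_deficient Eq_unit Ed_unit D_distr T_gt0 n) _.
by rewrite lee_fin sample_size_bound ?l_gt0.
Qed.
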